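(* Let $G=(V,E)$ be a finite connected graph with girth at least $9$ and minimum degree $\delta\ge 3$, and let $G^2-E$ denote the graph on vertex set $V$ in which $u,v$ are adjacent if and only if $\mathrm{dist}_G(u,v)=2$. Then $\mathrm{cc}(G^2-E)\ge \min\{2\delta,\gamma(G^2-E)\}$.
   Context: All graphs are finite and reflexive (a loop at every vertex; moving along a loop means passing); loops are ignored for girth, degrees and distances. $\gamma$ denotes domination number. $G^2$ is the square of $G$ (adding edges between vertices at distance $2$), so $G^2-E$ has exactly the edges joining vertices at distance $2$ in $G$. Cops and Attacking Robbers: the cop player places $k$ cops on vertices, then the robber chooses a vertex. In each round the cops move (each cop moves to an adjacent vertex or passes), then the robber moves (to an adjacent vertex or passes). The cops win if after finitely many moves a cop moves onto the robber's vertex. Additionally, if the robber moves onto a vertex occupied by a cop, exactly one cop on that vertex is removed from the game; the robber's initial placement on a cop's vertex does not count as an attack. Both players play optimally. The attacking cop number $\mathrm{cc}(G)$ is the least $k$ such that $k$ cops can guarantee a win. *)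

From mathcomp Require Import all_boot.
Set Implicit Arguments. Unset Strict Implicit. Unset Printing Implicit Defensive.

Section Defs.
Variable T : finType.

(* A finite simple graph is a symmetric irreflexive relation e on T;
   the loops of the reflexive graph are implicit (see [adj]). *)
Definition simple_graph (e : rel T) := symmetric e /\ irreflexive e.

Definition connected (e : rel T) := forall x y : T, connect e x y.

Definition deg (e : rel T) (x : T) : nat := #|[set y | e x y]|.

Definition girth_ge (e : rel T) (g : nat) :=
  forall c : seq T, ucycle e c -> 3 <= size c -> g <= size c.

Definition min_degree (e : rel T) (delta : nat) :=
  (forall x, delta <= deg e x) /\ (exists x, deg e x = delta).

Definition dist2 (e : rel T) : rel T :=
  fun x y => [&& x != y, ~~ e x y & [exists z, e x z && e z y]].

Definition sq_minus (e : rel T) : rel T := dist2 e.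

Definition dominating (e : rel T) (D : {set T}) :=
  [forall x, (x \in D) || [exists y in D, e y x]].

Definition domination_number (e : rel T) : nat :=
  \big[minn/#|T|]_(D : {set T} | dominating e D) #|D|.

Definition adj (e : rel T) : rel T := fun a b => (a == b) || e a b.

(* Cops and attacking robbers.  [cwin e cs r]: cops are at positions cs
   (a multiset given as a list), the robber is at r, and it is the cops'
   turn; the cops can force a capture in finitely many moves.
   After the cops move to cs', capture occurs if r \in cs'; otherwise the
   robber moves to r' (adjacent or pass), and if r' carries a cop, exactly
   one cop there is removed ([rem r' cs']). *)
Inductive cwin (e : rel T) : seq T -> T -> Prop :=
| cwin_step (cs : seq T) (r : T) (cs' : seq T) :
    all2 (adj e) cs cs' ->
    (r \in cs' \/ forall r', adj e r r' -> cwin e (rem r' cs') r') ->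
    cwin e cs r.

Definition cops_win (e : rel T) (k : nat) :=
  exists cs : seq T, size cs = k /\ forall r : T, cwin e cs r.

(* cc(e) >= m  iff every k for which k cops win satisfies m <= k
   (cc is the least such k). *)
Definition cc_ge (e : rel T) (m : nat) := forall k, cops_win e k -> m <= k.

End Defs.

From mathcomp Require Import all_boot zify.
Set Implicit Arguments. Unset Strict Implicit. Unset Printing Implicit Defensive.

(** Call a robber position safe if no cop occupies it or is adjacent to it in
    G^2 - E.  With fewer than gamma(G^2 - E) cops some vertex is safe, and the
    robber starts there.  From a safe vertex r he looks at the branches
    N(u) \ {r}, u in N(r), all of whose vertices are at distance 2 from r.
    Girth at least 9 ensures that no vertex other than r is within one move of
    two different branches, so with fewer than 2 delta cops some branch is
    within one move of at most one cop c.  If c lies in that branch the robber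
    attacks it; otherwise c, not adjacent to u, is at distance 2 from at most
    one vertex of N(u), and as deg u >= 3 the branch offers another vertex.
    Either way the robber reaches a safe vertex again, so he is never caught. *)

Section ClosedWalks.
Variables (T : eqType) (e : rel T).

Lemma path_map_iota (f : nat -> T) m n :
  (forall k, m <= k < m + n -> e (f k) (f k.+1)) ->
  path e (f m) [seq f k | k <- iota m.+1 n].
Proof.
elim: n m => [//|n IHn] m hf /=; apply/andP; split; first by apply: hf; lia.
by apply: IHn => k ?; apply: hf; lia.
Qed.

Lemma cycle_map_iota (f : nat -> T) i n :
  (forall k, i <= k < i + n -> e (f k) (f k.+1)) -> f (i + n) = f i ->
  cycle e [seq f k | k <- iota i n].
Proof.
case: n => [//|n] hf fin /=.
rewrite -{2}fin -map_rcons -cats1 -addSnnS -[[:: _]]/(iota (i.+1 + n) 1).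
rewrite -iotaD addn1.
by apply: path_map_iota => k ?; apply: hf; lia.
Qed.

Hypothesis eirr : irreflexive e.

Lemma closed_walk_ucycle (f : nat -> T) m :
  0 < m -> (forall k, k < m -> e (f k) (f k.+1)) -> f m = f 0 ->
  (forall k, k.+2 <= m -> f k != f k.+2) ->
  exists2 c, ucycle e c & 3 <= size c <= m.
Proof.
move=> m_gt0 hf fm no_backtrack.
(* The first repetition f i = f j closes a cycle, which has at least three
   vertices because the walk neither stays put nor backtracks. *)
pose repeats j := [exists i : 'I_j, f i == f j].
have repeat_at_m : repeats m.
  by apply/existsP; exists (Ordinal m_gt0); rewrite fm.
have [j /existsP[[i lt_ij] /= /eqP fij] min_j] :=
  ex_minnP (ex_intro repeats m repeat_at_m).
have le_jm : j <= m := min_j m repeat_at_m.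
have f_inj a b : a < j -> b < j -> f a = f b -> a = b.
  wlog ab : a b / a <= b => [hwlog|aj bj fab].
    by case/orP: (leq_total a b) => ? ? ? ?; [|symmetry]; apply: hwlog.
  rewrite leq_eqVlt in ab; case/orP: ab => [/eqP //|ab].
  suff : j <= b by lia.
  by apply: min_j; apply/existsP; exists (Ordinal ab); rewrite fab.
exists [seq f k | k <- iota i (j - i)]; last first.
  rewrite size_map size_iota; apply/andP; split; last by lia.
  have ? : j != i.+1.
    by apply: contraTneq (hf i _) => [ji|]; [rewrite -ji -fij eirr | lia].
  have ? : j != i.+2.
    by apply: contraTneq (no_backtrack i _) => [ji|]; [rewrite -ji -fij eqxx | lia].
  lia.
rewrite /ucycle cycle_map_iota; last by rewrite subnKC ?fij //; lia.
  rewrite map_inj_in_uniq ?iota_uniq // => a b /[!mem_iota] ha hb.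
  by apply: f_inj; lia.
by move=> k ?; apply: hf; lia.
Qed.

End ClosedWalks.

Section ShortClosedWalks.
Variables (T : finType) (e : rel T) (g : nat).
Hypotheses (eirr : irreflexive e) (girth_g : girth_ge e g).

Lemma no_short_closed_walk x s :
  path e x s -> last x s = x -> 0 < size s < g ->
  (forall k, k.+2 <= size s -> nth x (x :: s) k != nth x (x :: s) k.+2) -> False.
Proof.
move=> walk_s last_s /andP[s_gt0 s_lt_g] no_backtrack.
have [||c uc /andP[c_ge3 c_le_s]] := closed_walk_ucycle eirr s_gt0 _ _ no_backtrack.
- by move=> k; move/(pathP x): walk_s; apply.
- by have := nth_last x (x :: s); rewrite /= last_s.
have : g <= size c := girth_g uc c_ge3.
lia.
Qed.

End ShortClosedWalks.

Lemma sum_count_le (I : finType) (X : eqType)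
    (A : {pred I}) (P : I -> pred X) (s : seq X) :
  {in s, forall x, {in A &, forall u v, P u x -> P v x -> u = v}} ->
  \sum_(u in A) count (P u) s <= size s.
Proof.
elim: s => [|x s IHs] P_unique; first by rewrite big1.
rewrite big_split /= -add1n leq_add ?IHs //; last first.
  by move=> y ys; apply: (P_unique y); rewrite inE ys orbT.
rewrite -big_mkcondr sum1_card; apply/card_le1_eqP => u v /andP[uA Pu] /andP[vA Pv].
exact: P_unique x (mem_head x s) v u vA uA Pv Pu.
Qed.

Lemma geq_bigmin_seq (I : eqType) (r : seq I) (P : pred I) (F : I -> nat) m i :
  i \in r -> P i -> \big[minn/m]_(j <- r | P j) F j <= F i.
Proof.
elim: r => // j r IHr; rewrite inE big_cons => /orP[/eqP <- -> | ir Pi].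
  exact: geq_minl.
by case: (P j); rewrite ?geq_min IHr ?orbT.
Qed.

Lemma size_rem_le (T : eqType) (x : T) (s : seq T) : size (rem x s) <= size s.
Proof.
by case: (boolP (x \in s)) => [/size_rem ->|/rem_id ->]; rewrite ?leq_pred.
Qed.

Lemma all2_memr (S T : eqType) (R : S -> T -> bool) s t y :
  all2 R s t -> y \in t -> exists2 x, x \in s & R x y.
Proof.
elim: s t => [|a s IHs] [|b t] //= /andP[Rab Rst] /[!inE] /orP[/eqP ->|yt].
  by exists a; rewrite ?mem_head.
by have [x xs Rxy] := IHs t Rst yt; exists x; rewrite // inE xs orbT.
Qed.

Lemma two_nbrs_other_than (T : finType) (e : rel T) u r :
  2 < deg e u -> exists w1 w2, [/\ e u w1, w1 != r, e u w2, w2 != r & w1 != w2].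
Proof.
move=> deg_u; have /card_gt1P[w1 [w2 []]] : 1 < #|[set w | e u w] :\ r|.
  by move: deg_u; rewrite /deg (cardsD1 r); case: (r \in _); lia.
by rewrite !inE => /andP[w1r uw1] /andP[w2r uw2] w12; exists w1, w2.
Qed.

Section Safety.
Variables (T : finType) (R : rel T).

Definition safe (cs : seq T) (r : T) := all (fun c => ~~ adj R c r) cs.

Lemma safe_notin cs r : safe cs r -> r \notin cs.
Proof. by apply: contraL => rcs; apply/allPn; exists r; rewrite //= /adj eqxx. Qed.

Lemma safe_notin_moved cs cs' r : all2 (adj R) cs cs' -> safe cs r -> r \notin cs'.
Proof.
move=> moves /allP safe_r; apply/negP => /(all2_memr moves)[c ccs cr].
by have := safe_r c ccs; rewrite cr.
Qed.

Lemma domination_number_le D : dominating R D -> domination_number R <= #|D|.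
Proof. exact: geq_bigmin_seq (mem_index_enum D). Qed.

Lemma exists_safe cs : size cs < domination_number R -> exists r, safe cs r.
Proof.
move=> few_cops; case: (pickP (safe cs)) => [r safe_r|unsafe]; first by exists r.
have dom_cs : dominating R [set c in cs].
  apply/forallP => x; have /negbT/allPn[c ccs /negbNE] := unsafe x.
  case/orP => [/eqP <-|Rcx]; first by rewrite inE ccs.
  by apply/orP; right; apply/existsP; exists c; rewrite inE ccs.
have := leq_trans (domination_number_le dom_cs); rewrite cardsE.
by move/(_ _ (card_size cs)); lia.
Qed.

End Safety.

Section GirthNine.
Variables (T : finType) (e : rel T).
Hypotheses (esym : symmetric e) (eirr : irreflexive e) (girth9 : girth_ge e 9).

Lemma edge_neq x y : e x y -> x != y.
Proof. by apply: contraTneq => ->; rewrite eirr. Qed.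

Ltac edge := first [done | by rewrite esym].

(* Refutes the closed walk s (at most 8 steps) ending where it starts; the
   non-backtracking conditions not settled by the context are left open. *)
Ltac short_closed_walk s :=
  exfalso; apply: (no_short_closed_walk eirr girth9 (s := s)); rewrite //=;
  [ do ![apply/andP; split]; edge
  | case=> [|[|[|[|[|[|[|[|k]]]]]]]] //= _;
    try first [done | by rewrite eq_sym | by apply: edge_neq; edge] ].

Lemma dist2_path2 r u w : e r u -> e u w -> w != r -> dist2 e r w.
Proof.
move=> ru uw wr; rewrite /dist2 eq_sym wr /=; apply/andP; split.
  by apply/negP => rw; short_closed_walk [:: u; w; r].
by apply/existsP; exists u; rewrite ru.
Qed.

Lemma dist2_nbr_unique u c w1 w2 :
  ~~ e u c -> e u w1 -> e u w2 -> dist2 e c w1 -> dist2 e c w2 -> w1 = w2.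
Proof.
move=> uc uw1 uw2 /and3P[cw1 _ /existsP[z1 /andP[cz1 z1w1]]].
move=> /and3P[cw2 _ /existsP[z2 /andP[cz2 z2w2]]].
apply/eqP/contraT => w12; short_closed_walk [:: z1; w1; u; w2; z2; c].
- by apply: contraNneq uc => <-; edge.
- by apply: contraNneq uc => ->; edge.
Qed.

Lemma branch_ends_far r u1 u2 w1 w2 :
  e r u1 -> e r u2 -> u1 != u2 -> e u1 w1 -> w1 != r -> e u2 w2 -> w2 != r ->
  ~~ adj (dist2 e) w1 w2.
Proof.
move=> ru1 ru2 u12 u1w1 w1r u2w2 w2r; apply/negP.
case/orP=> [/eqP w12 | /and3P[w12 _ /existsP[z /andP[w1z zw2]]]].
  by rewrite -{}w12 in u2w2; short_closed_walk [:: u1; r; u2; w1].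
case: (eqVneq z u2) => [zu2|zu2]; first rewrite {}zu2 in w1z.
  by short_closed_walk [:: u1; r; u2; w1].
by short_closed_walk [:: u1; r; u2; w2; z; w1].
Qed.

Definition threatens r u c := [exists w, [&& e u w, w != r & adj (dist2 e) c w]].

Lemma threatens_unique r u1 u2 c :
  e r u1 -> e r u2 -> c != r -> threatens r u1 c -> threatens r u2 c -> u1 = u2.
Proof.
move=> ru1 ru2 cr /existsP[w1 /and3P[u1w1 w1r cw1]].
move=> /existsP[w2 /and3P[u2w2 w2r cw2]].
apply/eqP/contraT => u12.
have u1c : ~~ e u1 c.
  by apply: contraL cw2 => u1c; apply: (branch_ends_far ru1 ru2).
have u2c : ~~ e u2 c.
  by apply: contraL cw1 => u2c; apply: (branch_ends_far ru2 ru1); rewrite // eq_sym.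
case/orP: cw1 => [/eqP cw1 | /and3P[cw1 _ /existsP[z1 /andP[cz1 z1w1]]]].
  by rewrite cw1 u1w1 in u1c.
case/orP: cw2 => [/eqP cw2 | /and3P[cw2 _ /existsP[z2 /andP[cz2 z2w2]]]].
  by rewrite cw2 u2w2 in u2c.
short_closed_walk [:: z1; w1; u1; r; u2; w2; z2; c].
- by apply: contraNneq u1c => <-; edge.
- by apply: contraNneq u2c => ->; edge.
Qed.

Lemma safe_in_unthreatened_branch r u cs w :
  ~~ has (threatens r u) cs -> e u w -> w != r -> safe (dist2 e) cs w.
Proof.
move=> /hasPn unthreatened uw wr; apply/allP => c ccs.
by apply: contra (unthreatened c ccs) => cw; apply/existsP; exists w; rewrite uw wr.
Qed.

Lemma lightly_threatened_nbr r cs :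
  r \notin cs -> size cs < 2 * deg e r ->
  exists2 u, e r u & count (threatens r u) cs <= 1.
Proof.
move=> rcs few_cops.
case: (pickP [pred u | e r u & count (threatens r u) cs <= 1]) => [u /andP[]|heavy].
  by exists u.
have : 2 * deg e r <= \sum_(u in [set u | e r u]) count (threatens r u) cs.
  rewrite /deg mulnC -sum_nat_const; apply: leq_sum => u; rewrite inE => ru.
  by have := heavy u; rewrite /= ru /= => /negbT; rewrite -ltnNge.
have : \sum_(u in [set u | e r u]) count (threatens r u) cs <= size cs.
  apply: sum_count_le => c ccs u v; rewrite !inE => ru rv.
  by apply: threatens_unique ru rv _; apply: contraNneq rcs => <-.
lia.
Qed.

Variable delta : nat.
Hypotheses (deg_ge : forall x, delta <= deg e x) (delta_ge3 : 3 <= delta).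

Lemma safe_dist2_move r cs :
  r \notin cs -> size cs < 2 * delta ->
  exists2 r', dist2 e r r' & safe (dist2 e) (rem r' cs) r'.
Proof.
move=> rcs few_cops.
have [u ru light] : exists2 u, e r u & count (threatens r u) cs <= 1.
  apply: lightly_threatened_nbr => //; apply: (leq_trans few_cops).
  by rewrite leq_mul2l deg_ge orbT.
have [w1 [w2 [uw1 w1r uw2 w2r w12]]] :=
  two_nbrs_other_than r (leq_trans delta_ge3 (deg_ge u)).
have to_branch w : e u w -> w != r -> dist2 e r w := dist2_path2 ru.
have [threatened|unthreatened] := boolP (has (threatens r u) cs); last first.
  have safe_w1 := safe_in_unthreatened_branch unthreatened uw1 w1r.
  by exists w1; rewrite ?to_branch // rem_id ?(safe_notin safe_w1).
have /hasP[c ccs c_threat] := threatened.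
have cs_perm := perm_to_rem ccs.
have no_other_threat : ~~ has (threatens r u) (rem c cs).
  by move: light; rewrite has_count (permP cs_perm) /= c_threat; lia.
have cr : c != r by apply: contraNneq rcs => <-.
have [uc|uc] := boolP (e u c).
  exists c; first exact: to_branch.
  exact: safe_in_unthreatened_branch no_other_threat uc cr.
have [w [uw wr cw]] : exists w, [/\ e u w, w != r & ~~ dist2 e c w].
  case: (boolP (dist2 e c w1)) => cw1; last by exists w1.
  case: (boolP (dist2 e c w2)) => cw2; last by exists w2.
  by move: w12; rewrite (dist2_nbr_unique uc uw1 uw2 cw1 cw2) eqxx.
have safe_w : safe (dist2 e) cs w.
  rewrite /safe (perm_all _ cs_perm) -/(safe _ _ _) /=.
  rewrite (safe_in_unthreatened_branch no_other_threat uw wr) andbT.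
  rewrite /adj negb_or cw andbT.
  by apply: contraNneq uc => ->.
by exists w; rewrite ?to_branch ?rem_id ?(safe_notin safe_w).
Qed.

Lemma robber_escapes cs r :
  cwin (dist2 e) cs r -> safe (dist2 e) cs r -> size cs < 2 * delta -> False.
Proof.
(* The recursive occurrence of cwin sits under a disjunction, so the generated
   induction principle gives no induction hypothesis for it: recurse by fix. *)
move: cs r; fix IH 3 => cs r [{}cs {}r cs' moves caught_or_moves] safe_r few_cops.
have r_free : r \notin cs' := safe_notin_moved moves safe_r.
have few_cops' : size cs' < 2 * delta.
  by move: moves; rewrite all2E => /andP[/eqP <- _].
case: caught_or_moves => [caught|next]; first by rewrite caught in r_free.
have [r' rr' safe_r'] := safe_dist2_move r_free few_cops'.
apply: (IH _ _ (next r' _) safe_r'); first by rewrite /adj rr' orbT.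
exact: leq_ltn_trans (size_rem_le r' cs') few_cops'.
Qed.

End GirthNine.

Theorem lemma5 (T : finType) (e : rel T) (delta : nat) :
  simple_graph e -> connected e -> girth_ge e 9 ->
  min_degree e delta -> 3 <= delta ->
  cc_ge (sq_minus e) (minn (2 * delta) (domination_number (sq_minus e))).
Proof.
move=> [esym eirr] _ girth9 [deg_ge _] delta_ge3.
rewrite /sq_minus => _ [cs [<- cops_win]].
rewrite leqNgt leq_min; apply/negP => /andP[few_cops fewer_than_domination].
have [r safe_r] := exists_safe fewer_than_domination.
exact: (robber_escapes esym eirr girth9 deg_ge delta_ge3 (cops_win r) safe_r
  few_cops).
Qed.
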